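(* Let $k$ be a Calder\'on--Zygmund kernel of order $m$ on a closed set $X\subset\mathbb{R}^d$ with constants $C_{CZ},\tau$, $\mu$ a finite measure supported in $X$, and $T$ a bounded operator on $L^2(\mathbb{R}^d;\mu)$ with $Tf(x)=\int k(x,y)f(y)\,d\mu(y)$ for $x\notin\operatorname{supp}f$. Let $\alpha=\frac{\tau}{2(\tau+m)}$. Let $Q,R$ be cubes in $\mathbb{R}^d$ with $\ell(Q)\le\ell(R)$, and $\varphi_Q,\psi_R\in L^2(\mathbb{R}^d;\mu)$ with $\varphi_Q=0$ outside $Q$, $\psi_R=0$ outside $R$, $\int\varphi_Q\,d\mu=0$, and $\operatorname{dist}(Q,\operatorname{supp}\psi_R)\ge\ell(Q)^\alpha\ell(R)^{1-\alpha}$. Then $$\Big|\int\varphi_Q\,T\psi_R\,d\mu\Big|\le C\frac{\ell(Q)^{\tau/2}\ell(R)^{\tau/2}}{D(Q,R)^{m+\tau}}\sqrt{\mu(Q)}\sqrt{\mu(R)}\,\|\varphi_Q\|_{L^2(\mu)}\|\psi_R\|_{L^2(\mu)},$$ where $D(Q,R)=\ell(Q)+\ell(R)+\operatorname{dist}(Q,R)$ and $C$ depends only on $C_{CZ},\tau,m,d$.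
   Context: A Calder\'on--Zygmund kernel of order $m$ on $X$ with constants $C_{CZ},\tau\in(0,1]$: $|k(x,y)|\le C_{CZ}|x-y|^{-m}$ and $|k(y,x)-k(y,x')|+|k(x,y)-k(x',y)|\le C_{CZ}|x-x'|^\tau/|x-y|^{m+\tau}$ for $x,x',y\in X$ with $|x-x'|\le\frac12|x-y|$. $\ell(\cdot)$ is side length. The cubes $Q$ and $R$ themselves may intersect. *)

From HB Require Import structures.
From mathcomp Require Import all_boot all_order all_algebra.
From mathcomp Require Import all_classical all_reals all_analysis.
Set Implicit Arguments. Unset Strict Implicit. Unset Printing Implicit Defensive.
Import Order.TTheory GRing.Theory Num.Theory.
Import numFieldNormedType.Exports.
Local Open Scope classical_set_scope.
Local Open Scope ring_scope.

Definition Rd (R : realType) (d : nat) :=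
  g_sigma_algebraType (@open 'rV[R]_d).

Definition enorm (R : realType) (d : nat) (x : 'rV[R]_d) : R :=
  Num.sqrt (\sum_(i < d) x ord0 i ^+ 2).

(* Distance between two sets (in \bar R; +oo if one of them is empty). *)
Definition setdist (R : realType) (d : nat) (A B : set 'rV[R]_d) : \bar R :=
  ereal_inf [set (enorm (a - b))%:E | a in A & b in B].

Definition fsupp (R : realType) (d : nat) (f : 'rV[R]_d -> R) : set 'rV[R]_d :=
  closure [set x | f x != 0].

(* Q is a cube with corner a and side length l: it contains the open
   cube prod_i (a_i, a_i + l) and is contained in the closed one
   (any choice of boundary faces is allowed). *)
Definition is_cube (R : realType) (d : nat) (Q : set 'rV[R]_d)
    (a : 'rV[R]_d) (l : R) : Prop :=
  0 < l /\
  [set x : 'rV[R]_d | forall i, a ord0 i < x ord0 i < a ord0 i + l] `<=` Q /\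
  Q `<=` [set x : 'rV[R]_d | forall i, a ord0 i <= x ord0 i <= a ord0 i + l].

Definition CZ_kernel (R : realType) (d : nat) (X : set 'rV[R]_d)
    (m Ccz tau : R) (k : 'rV[R]_d -> 'rV[R]_d -> R) : Prop :=
  (forall x y, X x -> X y -> x != y ->
     `|k x y| <= Ccz * powR (enorm (x - y)) (- m)) /\
  (forall x x' y, X x -> X x' -> X y -> x != y ->
     enorm (x - x') <= 2^-1 * enorm (x - y) ->
     `|k y x - k y x'| + `|k x y - k x' y|
       <= Ccz * powR (enorm (x - x')) tau / powR (enorm (x - y)) (m + tau)).

Definition L2 (R : realType) (d : nat) (mu : {measure set (Rd R d) -> \bar R})
    (f : Rd R d -> R) : Prop :=
  measurable_fun setT f /\ (Lnorm mu 2%:E (EFin \o f) < +oo)%E.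

Definition L2norm (R : realType) (d : nat) (mu : {measure set (Rd R d) -> \bar R})
    (f : Rd R d -> R) : R := fine (Lnorm mu 2%:E (EFin \o f)).

(* T is a bounded linear operator on L^2(mu), acting on representatives
   and compatible with mu-a.e. equality. *)
Definition bounded_op_L2 (R : realType) (d : nat)
    (mu : {measure set (Rd R d) -> \bar R})
    (T : (Rd R d -> R) -> (Rd R d -> R)) : Prop :=
  (forall f, L2 mu f -> L2 mu (T f)) /\
  (forall f g, L2 mu f -> L2 mu g ->
     {ae mu, forall x, f x = g x} -> {ae mu, forall x, T f x = T g x}) /\
  (forall f g, L2 mu f -> L2 mu g ->
     {ae mu, forall x, T (f \+ g) x = T f x + T g x}) /\
  (forall (c : R) f, L2 mu f ->
     {ae mu, forall x, T (fun y => c * f y) x = c * T f x}) /\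
  (exists M : R, forall f, L2 mu f -> L2norm mu (T f) <= M * L2norm mu f).

(* Since Q is separated from supp psi, T psi agrees on Q (mu-a.e.) with the
   kernel integral g x = \int k x y psi y.  As phi has mean zero,
   \int phi T psi = \int phi (g - g c) for any c in Q, and it suffices to bound
   |k x y - k c y| for x, c in Q and y in supp psi.  When |x - c| <= |x - y| / 2
   the smoothness of k gives l(Q)^tau / |x - y|^(m+tau); otherwise
   |x - y| <~ l(Q) and the size bound at the separation distance
   delta = l(Q)^alpha l(R)^(1-alpha) is used.  The choice of alpha makes
   delta^(m+tau) = l(Q)^(tau/2) l(R)^(m+tau/2), so both cases give
   l(Q)^(tau/2) l(R)^(tau/2) / D(Q,R)^(m+tau).  Cauchy-Schwarz,
   \int |phi| <= sqrt(mu Q) |phi|_2, concludes.  Measurability of y |-> k x y,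
   which is not assumed, follows from its continuity on the closed set
   X `&` fsupp psi. *)

From HB Require Import structures.
From mathcomp Require Import all_boot all_order all_algebra.
From mathcomp Require Import all_classical all_reals all_analysis.
From mathcomp Require Import ring lra.
From mathcomp Require Import measurable_realfun.
Import Order.TTheory GRing.Theory Num.Theory.
Import numFieldNormedType.Exports.
Local Open Scope classical_set_scope.
Local Open Scope ring_scope.
Set Implicit Arguments. Unset Strict Implicit. Unset Printing Implicit Defensive.

Section separation_scale.
Variable R : realType.
Implicit Types a l L r D p tau c w : R.

Definition wgeomean a l L : R := l `^ a * L `^ (1 - a).

Lemma wgeomean_gt0 a l L : 0 < l -> 0 < L -> 0 < wgeomean a l L.
Proof. by move=> l0 L0; rewrite mulr_gt0 ?powR_gt0. Qed.

Lemma ler_powRl r a b : 0 <= r -> 0 <= a -> a <= b -> a `^ r <= b `^ r.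
Proof.
move=> r0 a0 ab; apply: (ge0_ler_powR r0); rewrite ?nnegrE //.
exact: le_trans ab.
Qed.

Lemma wgeomean_powRE l L tau p : 0 < l -> 0 < L -> 0 < p ->
  l `^ tau * L `^ p =
  l `^ (tau / 2) * L `^ (tau / 2) * wgeomean (tau / (2 * p)) l L `^ p.
Proof.
move=> l0 L0 p0; rewrite /wgeomean powRM ?powR_ge0 // -!powRrM.
have -> : tau / (2 * p) * p = tau / 2 by field; rewrite gt_eqF.
have ep : p = tau / 2 + (1 - tau / (2 * p)) * p by field; rewrite gt_eqF.
have et : tau = tau / 2 + tau / 2 by rewrite -splitr.
rewrite {1}et {1}ep !powRD ?(gt_eqF l0) ?(gt_eqF L0) ?implybT //; ring.
Qed.

Lemma smooth_ratio_le l L tau p D r : 0 < l -> l <= L -> 0 < tau -> 0 < p ->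
  0 < D -> wgeomean (tau / (2 * p)) l L <= r -> D <= 2 * L + r ->
  l `^ tau / r `^ p <= 3 `^ p * (l `^ (tau / 2) * L `^ (tau / 2)) / D `^ p.
Proof.
move=> l0 lL tau0 p0 D0 dr Dr.
have L0 : 0 < L by apply: lt_le_trans lL.
have r0 : 0 < r by apply: lt_le_trans dr; apply: wgeomean_gt0.
rewrite ler_pdivrMr ?powR_gt0 // mulrAC ler_pdivlMr ?powR_gt0 //.
have [Lr|rL] := leP L r.
- have D3 : D `^ p <= 3 `^ p * r `^ p.
    by rewrite -powRM ?(ltW r0) //; apply: ler_powRl; lra.
  have lG : l `^ tau <= l `^ (tau / 2) * L `^ (tau / 2).
    rewrite {1}[tau]splitr powRD ?(gt_eqF l0) ?implybT // ler_pM2l ?powR_gt0 //.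
    by apply: ler_powRl; [rewrite divr_ge0 // ltW | exact: ltW |].
  apply: (le_trans (ler_pM (powR_ge0 _ _) (powR_ge0 _ _) lG D3)).
  by rewrite mulrCA mulrA.
- have D3 : D `^ p <= 3 `^ p * L `^ p.
    by rewrite -powRM ?(ltW L0) //; apply: ler_powRl; lra.
  apply: (le_trans (ler_wpM2l (powR_ge0 _ _) D3)).
  rewrite mulrCA (wgeomean_powRE tau l0 L0 p0) !mulrA.
  apply: ler_wpM2l; first by rewrite !mulr_ge0 ?powR_ge0.
  by apply: ler_powRl; [exact: ltW | exact/ltW/wgeomean_gt0 |].
Qed.

Lemma size_ratio_le l L tau p D c w : 0 < l -> l <= L -> 0 < tau -> 0 < p -> 0 < D ->
  0 <= c -> 0 <= w ->
  wgeomean (tau / (2 * p)) l L <= c * l -> D <= w * L ->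
  wgeomean (tau / (2 * p)) l L `^ (tau - p)
    <= c `^ tau * w `^ p * (l `^ (tau / 2) * L `^ (tau / 2)) / D `^ p.
Proof.
move=> l0 lL tau0 p0 D0 c0 w0; set delta := wgeomean _ l L => dc Dw.
have L0 : 0 < L by apply: lt_le_trans lL.
have d0 : 0 < delta by apply: wgeomean_gt0.
rewrite powRB ?(gt_eqF d0) ?implybT //.
rewrite ler_pdivrMr ?powR_gt0 // mulrAC ler_pdivlMr ?powR_gt0 //.
have h1 : delta `^ tau <= c `^ tau * l `^ tau.
  by rewrite -powRM ?(ltW l0) //; apply: ler_powRl; [exact: ltW | exact: ltW |].
have h2 : D `^ p <= w `^ p * L `^ p.
  by rewrite -powRM ?(ltW L0) //; apply: ler_powRl; [exact: ltW | exact: ltW |].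
apply: (le_trans (ler_pM (powR_ge0 _ _) (powR_ge0 _ _) h1 h2)).
have -> : c `^ tau * l `^ tau * (w `^ p * L `^ p)
    = c `^ tau * w `^ p * (l `^ tau * L `^ p) by ring.
by rewrite (wgeomean_powRE tau l0 L0 p0) !mulrA.
Qed.

End separation_scale.

Section euclidean_norm.
Variables (R : realType) (d : nat).
Implicit Types (v x y : 'rV[R]_d).

Lemma enorm_ge0 v : 0 <= enorm v.
Proof. exact: sqrtr_ge0. Qed.

Lemma enorm_distrC x y : enorm (x - y) = enorm (y - x).
Proof.
by rewrite /enorm; congr Num.sqrt; apply: eq_bigr => i _; rewrite !mxE -opprB sqrrN.
Qed.

Lemma enorm_gt0_neq x y : 0 < enorm (x - y) -> x != y.
Proof.
apply: contraTneq => ->; rewrite -leNgt /enorm big1 ?sqrtr0 // => i _.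
by rewrite !mxE subrr expr0n.
Qed.

Lemma sqrt_dim_ge1 : (0 < d)%N -> 1 <= Num.sqrt (d%:R : R).
Proof. by move=> d0; rewrite -[X in X <= _]sqrtr1 ler_sqrt ?ler1n. Qed.

Lemma enorm_le_coord v c : 0 <= c -> (forall i, `|v ord0 i| <= c) ->
  enorm v <= Num.sqrt d%:R * c.
Proof.
move=> c0 hc; rewrite /enorm -(ger0_norm c0) -sqrtr_sqr -sqrtrM ?ler0n //.
rewrite ler_sqrt; last by rewrite mulr_ge0 ?ler0n ?sqr_ge0.
apply: le_trans (_ : \sum_(i < d) c ^+ 2 <= _).
  apply: ler_sum => i _; rewrite -real_normK ?num_real //.
  by rewrite !expr2; apply: ler_pM => //; exact: normr_ge0.
by rewrite sumr_const card_ord mulr_natl.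
Qed.

Lemma is_cube_enorm_le Q a l x y : is_cube Q a l -> Q x -> Q y ->
  enorm (x - y) <= Num.sqrt d%:R * l.
Proof.
move=> [l0 [_ Qsub]] Qx Qy; apply: enorm_le_coord => [|i]; first exact: ltW.
have := Qsub _ Qx i; have := Qsub _ Qy i; rewrite !mxE => /andP[h1 h2] /andP[h3 h4].
by rewrite ler_norml; apply/andP; split; lra.
Qed.

Lemma setdist_ge0 (A B : set 'rV[R]_d) : (0 <= setdist A B)%E.
Proof. by apply: le_ereal_inf_tmp => _ [x _ [y _ <-]]; rewrite lee_fin enorm_ge0. Qed.

Lemma setdist_le_enorm (A B : set 'rV[R]_d) x y : A x -> B y ->
  (setdist A B <= (enorm (x - y))%:E)%E.
Proof. by move=> Ax By; apply: ereal_inf_lbound; exists x => //; exists y. Qed.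

Lemma le_setdist_enorm (A B : set 'rV[R]_d) r x y : (r%:E <= setdist A B)%E ->
  A x -> B y -> r <= enorm (x - y).
Proof. by move=> rAB Ax By; rewrite -lee_fin (le_trans rAB) ?setdist_le_enorm. Qed.

Lemma le_setdist_notin (A B : set 'rV[R]_d) r x : 0 < r -> (r%:E <= setdist A B)%E ->
  A x -> ~ B x.
Proof.
move=> r0 rAB Ax /(le_setdist_enorm rAB Ax) /(lt_le_trans r0) /enorm_gt0_neq.
by rewrite eqxx.
Qed.

Lemma fine_setdist_le_enorm (A B : set 'rV[R]_d) x y : A x -> B y ->
  fine (setdist A B) <= enorm (x - y).
Proof.
move=> Ax By; have := setdist_le_enorm Ax By.
by move: (setdist_ge0 A B); case: (setdist A B).
Qed.

Lemma sides_setdist_le (A B : set 'rV[R]_d) lA lB x y : lA <= lB -> A x -> B y ->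
  lA + lB + fine (setdist A B) <= 2 * lB + enorm (x - y).
Proof. by move=> lAB Ax By; have := fine_setdist_le_enorm Ax By; lra. Qed.

End euclidean_norm.

Definition CZ_diff_const (R : realType) (N m Ccz tau : R) : R :=
  2 * Ccz * (2 * (1 + N)) `^ tau * (2 * (1 + N)) `^ (m + tau).

Section CZ_kernel_bounds.
Variables (R : realType) (d : nat) (X : set 'rV[R]_d) (m Ccz tau : R).
Variable k : 'rV[R]_d -> 'rV[R]_d -> R.

Lemma CZ_kernel_le_sep x y delta : 0 < m -> 0 < Ccz ->
  CZ_kernel X m Ccz tau k -> X x -> X y -> 0 < delta -> delta <= enorm (x - y) ->
  `|k x y| <= Ccz * delta `^ (- m).
Proof.
move=> m0 C0 [hk _] Xx Xy d0 dxy.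
have r0 : 0 < enorm (x - y) := lt_le_trans d0 dxy.
apply: le_trans (hk x y Xx Xy (enorm_gt0_neq r0)) _.
rewrite ler_pM2l // !powRN lef_pV2 ?posrE ?powR_gt0 //.
by apply: ler_powRl; [exact: ltW | exact: ltW |].
Qed.

Section kernel_difference.
Variables (N : R) (x c y : 'rV[R]_d) (lQ lR D : R).
Local Notation p := (m + tau).
Local Notation delta := (wgeomean (tau / (2 * p)) lQ lR).
Local Notation G := (lQ `^ (tau / 2) * lR `^ (tau / 2)).

Lemma CZ_kernel_diff_le_smooth : 0 < Ccz -> 0 < tau -> 0 < m ->
  CZ_kernel X m Ccz tau k -> X x -> X c -> X y ->
  0 < lQ -> lQ <= lR -> 0 <= N -> enorm (x - c) <= N * lQ ->
  delta <= enorm (x - y) -> 0 < D -> D <= 2 * lR + enorm (x - y) ->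
  enorm (x - c) <= 2^-1 * enorm (x - y) ->
  `|k x y - k c y| <= Ccz * N `^ tau * 3 `^ p * (G / D `^ p).
Proof.
move=> C0 t0 m0 hk Xx Xc Xy lQ0 lQR N0 sxc dxy D0 Dxy sxy.
have p0 : 0 < p by rewrite addr_gt0.
have d0 : 0 < delta by apply: wgeomean_gt0 => //; apply: lt_le_trans lQR.
have r0 : 0 < enorm (x - y) := lt_le_trans d0 dxy.
have smooth := hk.2 x c y Xx Xc Xy (enorm_gt0_neq r0) sxy.
have sN : enorm (x - c) `^ tau <= N `^ tau * lQ `^ tau.
  rewrite -powRM ?(ltW lQ0) //.
  by apply: ler_powRl; [exact: ltW | exact: enorm_ge0 |].
have ratio := smooth_ratio_le lQ0 lQR t0 p0 D0 dxy Dxy.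
apply: le_trans (le_trans (ler_wpDl (normr_ge0 _) (lexx _)) smooth) _.
apply: le_trans (_ : Ccz * (N `^ tau * lQ `^ tau) / enorm (x - y) `^ p <= _).
  apply: ler_wpM2r; first by rewrite invr_ge0 powR_ge0.
  by apply: ler_wpM2l; first exact: ltW.
rewrite -!mulrA; apply: ler_wpM2l; first exact: ltW.
by apply: ler_wpM2l; [exact: powR_ge0 | apply: le_trans ratio _; rewrite !mulrA].
Qed.

Lemma CZ_kernel_diff_le_size : 0 < Ccz -> 0 < tau -> 0 < m ->
  CZ_kernel X m Ccz tau k -> X x -> X c -> X y ->
  0 < lQ -> lQ <= lR -> 0 <= N -> enorm (x - c) <= N * lQ ->
  delta <= enorm (x - y) -> delta <= enorm (c - y) ->
  0 < D -> D <= 2 * lR + enorm (x - y) ->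
  2^-1 * enorm (x - y) < enorm (x - c) ->
  `|k x y - k c y| <= 2 * Ccz * (2 * N) `^ tau * (2 * (1 + N)) `^ p * (G / D `^ p).
Proof.
move=> C0 t0 m0 hk Xx Xc Xy lQ0 lQR N0 sxc dxy dcy D0 Dxy sxy.
have p0 : 0 < p by rewrite addr_gt0.
have d0 : 0 < delta by apply: wgeomean_gt0 => //; apply: lt_le_trans lQR.
have r2N : enorm (x - y) <= 2 * N * lQ.
  have := lt_le_trans sxy sxc; rewrite ltr_pdivrMl // -mulrA; exact: ltW.
have NQR : N * lQ <= N * lR by apply: ler_wpM2l.
have DW : D <= 2 * (1 + N) * lR by move: Dxy r2N NQR; rewrite -mulrA; lra.
have c0 : 0 <= 2 * N by rewrite mulr_ge0.
have w0 : 0 <= 2 * (1 + N) by rewrite mulr_ge0 // addr_ge0.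
have := size_ratio_le lQ0 lQR t0 p0 D0 c0 w0 (le_trans dxy r2N) DW.
have -> : tau - p = - m by ring.
move=> size.
have kxy := CZ_kernel_le_sep m0 C0 hk Xx Xy d0 dxy.
have kcy := CZ_kernel_le_sep m0 C0 hk Xc Xy d0 dcy.
apply: le_trans (ler_normB _ _) _; apply: le_trans (lerD kxy kcy) _.
have -> : Ccz * delta `^ (- m) + Ccz * delta `^ (- m) = 2 * Ccz * delta `^ (- m).
  by ring.
rewrite -!mulrA; apply: ler_wpM2l => //; apply: ler_wpM2l; first exact: ltW.
by apply: le_trans size _; rewrite !mulrA.
Qed.

Lemma CZ_kernel_diff_le : 0 < Ccz -> 0 < tau -> 0 < m ->
  CZ_kernel X m Ccz tau k -> X x -> X c -> X y ->
  0 < lQ -> lQ <= lR -> 1 <= N -> enorm (x - c) <= N * lQ ->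
  delta <= enorm (x - y) -> delta <= enorm (c - y) ->
  0 < D -> D <= 2 * lR + enorm (x - y) ->
  `|k x y - k c y| <= CZ_diff_const N m Ccz tau * (G / D `^ p).
Proof.
move=> C0 t0 m0 hk Xx Xc Xy lQ0 lQR N1 sxc dxy dcy D0 Dxy.
have N0 : 0 <= N := le_trans ler01 N1.
have GD0 : 0 <= G / D `^ p by rewrite divr_ge0 ?mulr_ge0 ?powR_ge0.
have W0 : 0 <= 2 * (1 + N) by rewrite mulr_ge0 ?addr_ge0.
have Wt : forall b, 0 <= b <= 2 * (1 + N) -> b `^ tau <= (2 * (1 + N)) `^ tau.
  by move=> b /andP[b0 bW]; apply: ler_powRl => //; exact: ltW.
have Wp : 3 `^ p <= (2 * (1 + N)) `^ p.
  by apply: ler_powRl; [rewrite addr_ge0 // ltW | | move: N1; lra].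
rewrite /CZ_diff_const.
have [sxy|sxy] := leP (enorm (x - c)) (2^-1 * enorm (x - y)).
- apply: le_trans (CZ_kernel_diff_le_smooth C0 t0 m0 hk Xx Xc Xy lQ0 lQR N0
    sxc dxy D0 Dxy sxy) _.
  apply: ler_wpM2r => //; apply: ler_pM; rewrite ?mulr_ge0 ?powR_ge0 ?(ltW C0) //.
  apply: ler_pM; rewrite ?powR_ge0 ?(ltW C0) //; first by move: C0; lra.
  by rewrite Wt // N0; move: N1; lra.
- apply: le_trans (CZ_kernel_diff_le_size C0 t0 m0 hk Xx Xc Xy lQ0 lQR N0
    sxc dxy dcy D0 Dxy sxy) _.
  apply: ler_wpM2r => //; apply: ler_wpM2r; first exact: powR_ge0.
  by apply: ler_wpM2l; [rewrite mulr_ge0 // ltW | rewrite Wt // mulr_ge0 //=; move: N1; lra].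
Qed.

End kernel_difference.
End CZ_kernel_bounds.

Section zero_extension.
Variables (R : realType) (d : nat).

Lemma Rd_measurable_open (U : set 'rV[R]_d) : open U -> measurable (U : set (Rd R d)).
Proof. by move=> oU; apply: sub_sigma_algebra. Qed.

Lemma Rd_measurable_closed (U : set 'rV[R]_d) :
  closed U -> measurable (U : set (Rd R d)).
Proof.
move=> cU; rewrite -(setCK U); apply: measurableC; apply: Rd_measurable_open.
by rewrite openC.
Qed.

Lemma Rd_measurable_compl_closed (U : set 'rV[R]_d) :
  closed U -> measurable (~` U : set (Rd R d)).
Proof. by move=> cU; apply: measurableC; exact: Rd_measurable_closed. Qed.

Definition enorm_cont_on (A : set 'rV[R]_d) (f : 'rV[R]_d -> R) : Prop :=
  forall y eps, A y -> 0 < eps -> exists2 eta, 0 < eta &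
    forall y', A y' -> enorm (y - y') <= eta -> `|f y - f y'| < eps.

Lemma enorm_cont_on_itv_nbhs (A : set 'rV[R]_d) f z a b : (0 < d)%N ->
  enorm_cont_on A f -> A z -> a < f z < b ->
  exists U, [/\ open U, U z & forall y, A y -> U y -> a < f y < b].
Proof.
move=> d0 fcont Az /andP[az zb].
set eps := Order.min (f z - a) (b - f z).
have e0 : 0 < eps by rewrite lt_min !subr_gt0 az zb.
have e1 : eps <= f z - a by rewrite ge_min lexx.
have e2 : eps <= b - f z by rewrite ge_min lexx orbT.
have [eta eta0 heta] := fcont z _ Az e0.
have sqd : 0 < Num.sqrt (d%:R : R) by rewrite sqrtr_gt0 ltr0n.
exists (ball z (eta / Num.sqrt d%:R)); split; first exact: ball_open.
  exact: ballxx (divr_gt0 eta0 sqd).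
move=> y Ay zy.
have zy_eta : enorm (z - y) <= eta.
  have -> : eta = Num.sqrt d%:R * (eta / Num.sqrt d%:R).
    by rewrite mulrC -mulrA mulVf ?gt_eqF // mulr1.
  apply: enorm_le_coord => [|i]; first by rewrite ltW // divr_gt0.
  case: zy => _ /(_ ord0 i); rewrite !mxE -ball_normE /ball_ /= distrC.
  exact: ltW.
have := heta y Ay zy_eta; rewrite ltr_distlC => /andP[h1 h2].
by apply/andP; split; lra.
Qed.

(* The preimage of an open interval is the union of a relatively open subset of
   [A] with [~` A] or with the empty set. *)
Lemma measurable_fun_zero_ext (A : set 'rV[R]_d) (f : 'rV[R]_d -> R) :
  (0 < d)%N -> closed A -> enorm_cont_on A f ->
  measurable_fun [set: Rd R d] (fun y : Rd R d => if y \in A then f y else 0).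
Proof.
move=> d0 cA fcont.
apply: (measurability _ (RGenOpens.measurableE R)) => _ [_ [a [b ->]] <-].
set W := \bigcup_(U in [set U | open U /\ forall y, A y -> U y -> a < f y < b]) U.
have oW : open W by apply: bigcup_open => U [].
set P := [set _ : 'rV[R]_d | a < 0 < b].
have mP : measurable (P : set (Rd R d)).
  have [ab|ab] := boolP (a < 0 < b).
    by rewrite (_ : P = setT) //; apply/seteqP; split.
  by rewrite (_ : P = set0) //; apply/seteqP; split => // z; rewrite /P /= (negbTE ab).
have -> : [set: Rd R d] `&` (fun y : Rd R d => if y \in A then f y else 0) @^-1` `]a, b[
    = (A `&` W) `|` (~` A `&` P).
  apply/seteqP; split => z.
  - rewrite /= in_itv /=; case: ifPn => [/set_mem Az|/negP zA] [_ abz].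
      have [U [oU Uz hU]] := enorm_cont_on_itv_nbhs d0 fcont Az abz.
      by left; split => //; exists U.
    by right; split => // Az; apply: zA; exact: mem_set.
  - case => [[Az [U [oU hU] Uz]]|[nAz Pz]]; split => //=; rewrite in_itv /=.
      by rewrite (mem_set Az); exact: hU.
    by rewrite memNset.
apply: measurableU; apply: measurableI => //.
- exact: Rd_measurable_closed.
- exact: Rd_measurable_open.
- exact: Rd_measurable_compl_closed.
Qed.

End zero_extension.

Lemma CZ_kernel_cont_off (R : realType) (d : nat) (X A : set 'rV[R]_d)
    (m Ccz tau : R) (k : 'rV[R]_d -> 'rV[R]_d -> R) x delta :
  0 < Ccz -> 0 < tau -> 0 < m -> CZ_kernel X m Ccz tau k -> A `<=` X -> X x ->
  0 < delta -> (forall y, A y -> delta <= enorm (y - x)) -> enorm_cont_on A (k x).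
Proof.
move=> C0 t0 m0 [_ hk] AX Xx d0 hA y eps Ay e0.
set r := enorm (y - x); set p := m + tau.
have r0 : 0 < r := lt_le_trans d0 (hA _ Ay).
have p0 : 0 < p by rewrite addr_gt0.
(* [s^tau <= E] makes the smoothness bound [Ccz s^tau / r^p] at most [eps / 2]. *)
set E := eps * r `^ p / (2 * Ccz).
have E0 : 0 < E by rewrite divr_gt0 ?mulr_gt0 ?powR_gt0.
exists (Order.min (r / 2) (E `^ tau^-1)); first by rewrite lt_min divr_gt0 ?powR_gt0.
move=> y' Ay'; set s := enorm (y - y'); rewrite le_min => /andP[sr sE].
have sr2 : s <= 2^-1 * r by rewrite mulrC.
have := hk y y' x (AX _ Ay) (AX _ Ay') Xx (enorm_gt0_neq r0) sr2.
move=> /(le_trans (ler_wpDr (normr_ge0 _) (lexx _))) smooth.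
have sE' : s `^ tau <= E.
  apply: le_trans (_ : (E `^ tau^-1) `^ tau <= E).
    by apply: ler_powRl; [exact: ltW | exact: enorm_ge0 |].
  by rewrite -powRrM mulVf ?gt_eqF // powRr1 // ltW.
apply: le_lt_trans smooth _.
rewrite ltr_pdivrMr ?powR_gt0 //.
apply: le_lt_trans (_ : Ccz * E < _); first by rewrite ler_pM2l.
have -> : Ccz * E = eps * r `^ p / 2 by rewrite /E; field; rewrite gt_eqF.
by rewrite ltr_pdivrMr // ltr_pMr ?mulr_gt0 ?powR_gt0 // ltr1n.
Qed.

Section integral_outside_null.
Context d (T : measurableType d) (R : realType) (mu : {measure set T -> \bar R}).
Local Open Scope ereal_scope.
Import HBNNSimple.

(* Unlike [ae_eq_integral], no measurability is required. *)
Lemma ge0_le_integral_outside_null (N : set T) (f g : T -> \bar R) :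
  measurable N -> mu N = 0 -> (forall x, 0 <= f x) -> (forall x, 0 <= g x) ->
  (forall x, ~ N x -> f x = g x) -> \int[mu]_x f x <= \int[mu]_x g x.
Proof.
move=> mN N0 f0 g0 fg.
rewrite (ge0_integralTE _ f0) (ge0_integralTE _ g0).
apply: ge_ereal_sup => _ [h /= hf <-].
have mCN : measurable (~` N) by exact: measurableC.
pose h' := proj_nnsfun h mCN.
apply: ereal_sup_ubound => /=; exists h'.
  move=> x; rewrite /h' /= /measurable_realfun.mindic indicE.
  have [xN|xN] := boolP (x \in ~` N).
    by rewrite mulr1 -fg; [exact: hf | move: xN; rewrite inE].
  by rewrite mulr0 g0.
rewrite -!integralT_nnsfun.
have mh : measurable_fun [set: T] (EFin \o h).
  by apply/measurable_EFinP; exact: measurable_funPT.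
have mh' : measurable_fun [set: T] (EFin \o h').
  by apply/measurable_EFinP; exact: measurable_funPT.
rewrite (ge0_negligible_integral _ _ _ _ N0) //; last by move=> x _; rewrite lee_fin.
rewrite [RHS](ge0_negligible_integral _ _ _ _ N0) //; last by move=> x _; rewrite lee_fin.
apply: eq_integral => x; rewrite inE => -[_ xN].
by rewrite /h' /= /measurable_realfun.mindic indicE mem_set // mulr1.
Qed.

Lemma eq_integral_outside_null (N : set T) (f g : T -> \bar R) :
  measurable N -> mu N = 0 ->
  (forall x, ~ N x -> f x = g x) -> \int[mu]_x f x = \int[mu]_x g x.
Proof.
move=> mN N0 fg; rewrite (integralE _ _ f) (integralE _ _ g).
have hp x : ~ N x -> f^\+ x = g^\+ x by move=> nx; rewrite !funeposE fg.
have hn x : ~ N x -> f^\- x = g^\- x by move=> nx; rewrite !funenegE fg.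
congr (_ - _); apply/eqP; rewrite eq_le; apply/andP; split;
  apply: (ge0_le_integral_outside_null mN N0) => x;
  by [exact: funepos_ge0 | exact: funeneg_ge0 | move=> /hp | move=> /hn].
Qed.

Lemma eq_Rintegral_outside_null (N : set T) (f g : T -> R) :
  measurable N -> mu N = 0 ->
  (forall x, ~ N x -> f x = g x) -> (\int[mu]_x f x = \int[mu]_x g x)%R.
Proof.
move=> mN N0 fg; rewrite /Rintegral; congr fine.
by apply: (eq_integral_outside_null mN N0) => x /fg ->.
Qed.

End integral_outside_null.

Section real_integrals.
Context d (T : measurableType d) (R : realType) (mu : {measure set T -> \bar R}).
Implicit Types (f g : T -> R).

Lemma integrable_EFinB f g : mu.-integrable [set: T] (EFin \o f) ->
  mu.-integrable [set: T] (EFin \o g) ->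
  mu.-integrable [set: T] (EFin \o (fun x => f x - g x)).
Proof.
move=> hf hg; have := integrableB measurableT hf hg.
by apply: eq_integrable => // x _; rewrite /= EFinB.
Qed.

Lemma integrable_EFinZl (c : R) f : mu.-integrable [set: T] (EFin \o f) ->
  mu.-integrable [set: T] (EFin \o (fun x => c * f x)).
Proof.
move=> hf; have := integrableZl measurableT c hf.
by apply: eq_integrable => // x _; rewrite /= EFinM.
Qed.

Lemma le_integrable_EFin f g : measurable_fun [set: T] f ->
  (forall x, `|f x| <= `|g x|) -> mu.-integrable [set: T] (EFin \o g) ->
  mu.-integrable [set: T] (EFin \o f).
Proof.
move=> mf fg; apply: (le_integrable measurableT); first exact/measurable_EFinP.
by move=> x _ /=; rewrite lee_fin.
Qed.

Lemma fine_le_EFin (e : \bar R) (r : R) : (0 <= e)%E -> (e <= r%:E)%E -> fine e <= r.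
Proof. by case: e => [x| |] //=; rewrite lee_fin. Qed.

Lemma ae_le_Rintegral (N : set T) f g : measurable N -> mu N = 0 ->
  measurable_fun [set: T] f -> measurable_fun [set: T] g ->
  (forall x, 0 <= f x) -> (forall x, 0 <= g x) ->
  mu.-integrable [set: T] (EFin \o g) ->
  (forall x, ~ N x -> f x <= g x) -> \int[mu]_x f x <= \int[mu]_x g x.
Proof.
move=> mN N0 mf mg f0 g0 ig fg.
have fing : (\int[mu]_x (g x)%:E)%E \is a fin_num by exact: integrable_fin_num.
rewrite /Rintegral; apply: fine_le_EFin; first by apply: integral_ge0 => x _; rewrite lee_fin.
rewrite fineK //; apply: ae_ge0_le_integral => //.
- by move=> x _; rewrite lee_fin.
- exact/measurable_EFinP.
- by move=> x _; rewrite lee_fin.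
- exact/measurable_EFinP.
exists N; split => // x /= hx; apply: contrapT => nx; apply: hx => _.
by rewrite lee_fin; exact: fg.
Qed.

Lemma Lnorm2_indic (Q : set T) : measurable Q ->
  Lnorm mu 2%:E (EFin \o \1_Q) = (mu Q `^ (2^-1))%E.
Proof.
move=> mQ; rewrite unlock /=; congr (_ `^ _)%E.
have := integral_indic mu measurableT mQ; rewrite setIT => <-.
apply: eq_integral => x _ /=; rewrite indicE.
by case: (x \in Q); rewrite /= ?normr1 ?normr0 ?powR1 ?powR0.
Qed.

Section supported_L2.
Variables (Q : set T) (f : T -> R).
Hypotheses (mQ : measurable Q) (mf : measurable_fun [set: T] f).
Hypotheses (f0 : forall x, ~ Q x -> f x = 0) (muT : (mu [set: T] < +oo)%E).
Hypothesis fL2 : (Lnorm mu 2%:E (EFin \o f) < +oo)%E.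

(* Hoelder's inequality for [f] and the indicator of its support. *)
Lemma integral_abs_le_sqrt_measure_Lnorm2 :
  (\int[mu]_x (`|f x|)%:E
    <= (Num.sqrt (fine (mu Q)) * fine (Lnorm mu 2%:E (EFin \o f)))%:E)%E.
Proof.
have mi : measurable_fun [set: T] (\1_Q : T -> R) by exact: measurable_indic.
have half : (2^-1 + 2^-1 = 1 :> R) by lra.
have := hoelder mu mf mi (ltr0n _ 2) (ltr0n _ 2) half.
rewrite Lnorm1 Lnorm2_indic //.
have -> : (\int[mu]_x `|(EFin \o (f \* \1_Q)%R) x| = \int[mu]_x (`|f x|)%:E)%E.
  apply: eq_integral => x _ /=; rewrite indicE.
  have [/set_mem xQ|xQ] := boolP (x \in Q); first by rewrite mulr1.
  by rewrite mulr0 f0 ?normr0 //; move: xQ; rewrite notin_setE.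
have fQ : (mu Q \is a fin_num)%E.
  rewrite ge0_fin_numE ?measure_ge0 //.
  by apply: le_lt_trans muT; apply: le_measure; rewrite ?inE.
have fN : (Lnorm mu 2%:E (EFin \o f) \is a fin_num)%E by rewrite ge0_fin_numE ?Lnorm_ge0.
rewrite -{1}(fineK fQ) -{1}(fineK fN) poweR_EFin.
by rewrite powR12_sqrt ?fine_ge0 ?measure_ge0 // -EFinM mulrC.
Qed.

Lemma integrable_supported_L2 : mu.-integrable [set: T] (EFin \o f).
Proof.
apply/integrableP; split; first exact/measurable_EFinP.
by apply: le_lt_trans integral_abs_le_sqrt_measure_Lnorm2 _; rewrite ltry.
Qed.

Lemma Rintegral_abs_le_sqrt_measure_Lnorm2 :
  \int[mu]_x `|f x| <= Num.sqrt (fine (mu Q)) * fine (Lnorm mu 2%:E (EFin \o f)).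
Proof.
rewrite /Rintegral; apply: fine_le_EFin integral_abs_le_sqrt_measure_Lnorm2.
by apply: integral_ge0 => x _; rewrite lee_fin.
Qed.

End supported_L2.
End real_integrals.

Section mean_zero_pairing.
Context d (T : measurableType d) (R : realType) (mu : {measure set T -> \bar R}).

(* Subtracting a value of [h] does not change the pairing with a mean-zero [phi]. *)
Lemma abs_Rintegral_mul_mean0_le (N : set T) (phi h : T -> R) (K : R) :
  measurable N -> mu N = 0%E ->
  measurable_fun [set: T] phi -> measurable_fun [set: T] h ->
  mu.-integrable [set: T] (EFin \o phi) -> \int[mu]_x phi x = 0 -> 0 <= K ->
  (forall x y, ~ N x -> ~ N y -> phi x != 0 -> phi y != 0 -> `|h x - h y| <= K) ->
  `|\int[mu]_x (phi x * h x)| <= K * \int[mu]_x `|phi x|.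
Proof.
move=> mN N0 mphi mh iphi phi_mean0 K0 hK.
have absphi0 : 0 <= \int[mu]_x `|phi x| by apply: Rintegral_ge0 => x _.
have [[x0 [Nx0 phix0]]|nophi] := pselect (exists x0, ~ N x0 /\ phi x0 != 0); last first.
  rewrite (@eq_Rintegral_outside_null _ _ _ _ N _ (fun=> 0)) //.
    by rewrite Rintegral_cst // mul0r normr0 mulr_ge0.
  move=> x Nx; have [->|phix] := eqVneq (phi x) 0; first by rewrite mul0r.
  by exfalso; apply: nophi; exists x.
have mphih : measurable_fun [set: T] (fun x => phi x * h x) by exact: measurable_funM.
have [fin|nfin] := boolP ((\int[mu]_x ((phi x * h x)%:E))%E \is a fin_num); last first.
  by rewrite /Rintegral; move: nfin; case: (\int[mu]_x _)%E => // _; rewrite normr0 mulr_ge0.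
have iphih : mu.-integrable [set: T] (EFin \o (fun x => phi x * h x)).
  apply/integrableP; split; first exact/measurable_EFinP.
  by move: (integral_fin_num_abs mu measurableT mphih); rewrite fin.
have iphia := integrable_EFinZl (h x0) iphi.
have -> : \int[mu]_x (phi x * h x) = \int[mu]_x (phi x * h x - h x0 * phi x).
  by rewrite RintegralB // RintegralZl // phi_mean0 mulr0 subr0.
apply: le_trans (le_normr_Rintegral measurableT (integrable_EFinB iphih iphia)) _.
rewrite -RintegralZl //; last exact: integrable_norm.
apply: (ae_le_Rintegral mN N0) => //.
- apply: measurableT_comp; first exact: normr_measurable.
  by apply: measurable_funB => //; exact: measurable_funM.
- by apply: measurable_funM => //; apply: measurableT_comp; first exact: normr_measurable.
- by move=> x; rewrite mulr_ge0.
- exact/integrable_EFinZl/integrable_norm.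
move=> x Nx; rewrite [h x0 * _]mulrC -mulrBr normrM mulrC.
have [->|phix] := eqVneq (phi x) 0; first by rewrite normr0 !mulr0.
by apply: ler_wpM2r => //; exact: hK.
Qed.

End mean_zero_pairing.

Section kernel_integral.
Variables (R : realType) (d : nat) (X : set 'rV[R]_d) (m Ccz tau : R).
Variables (k : 'rV[R]_d -> 'rV[R]_d -> R) (mu : {measure set (Rd R d) -> \bar R}).
Variable psi : Rd R d -> R.
Hypotheses (d0 : (0 < d)%N) (C0 : 0 < Ccz) (t0 : 0 < tau) (m0 : 0 < m).
Hypotheses (hk : CZ_kernel X m Ccz tau k) (cX : closed X) (muX : mu (~` X) = 0%E).
Hypotheses (mpsi : measurable_fun [set: Rd R d] psi).
Hypothesis ipsi : mu.-integrable [set: Rd R d] (EFin \o psi).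

(* Off the null set [~` X] the integrand only sees [k x] on the closed set
   [X `&` fsupp psi], where it is continuous as soon as [x] is away from it. *)
Local Notation kpsi x := (fun y : Rd R d =>
  (if y \in X `&` fsupp psi then k x y else 0) * psi y).

Let fsupp_psi y : psi y != 0 -> fsupp psi y.
Proof. by move=> ?; apply: subset_closure. Qed.

Lemma Rintegral_kernel_restrict x :
  \int[mu]_y (k x y * psi y) = \int[mu]_y kpsi x y.
Proof.
apply: (eq_Rintegral_outside_null (Rd_measurable_compl_closed cX) muX) => y /contrapT Xy.
case: ifPn => // /negP yXS; have [->|/fsupp_psi Sy] := eqVneq (psi y) 0.
  by rewrite !mulr0.
by exfalso; apply: yXS; exact: mem_set.
Qed.

Section separated.
Variables (x : 'rV[R]_d) (delta : R).
Hypotheses (Xx : X x) (delta0 : 0 < delta).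
Hypothesis sep : forall y, fsupp psi y -> delta <= enorm (x - y).

Lemma measurable_kernel_integrand : measurable_fun [set: Rd R d] (kpsi x).
Proof.
apply: measurable_funM => //; apply: measurable_fun_zero_ext => //.
  by apply: closedI => //; exact: closed_closure.
have AX : X `&` fsupp psi `<=` X by move=> ? [].
apply: (CZ_kernel_cont_off C0 t0 m0 hk AX Xx delta0).
by move=> y' [_ /sep]; rewrite enorm_distrC.
Qed.

Lemma kernel_integrand_le y : `|kpsi x y| <= Ccz * delta `^ (- m) * `|psi y|.
Proof.
rewrite normrM ler_wpM2r //; case: ifPn => [/set_mem [Xy Sy]|_].
  exact: CZ_kernel_le_sep m0 C0 hk Xx Xy delta0 (sep Sy).
by rewrite normr0 mulr_ge0 ?powR_ge0 // ltW.
Qed.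

Lemma integrable_kernel_integrand : mu.-integrable [set: Rd R d] (EFin \o kpsi x).
Proof.
apply: (le_integrable_EFin measurable_kernel_integrand) => [y|].
  by apply: le_trans (kernel_integrand_le y) (ler_norm _).
exact/integrable_EFinZl/integrable_norm.
Qed.

End separated.

Lemma Rintegral_kernel_diff_le x c delta B : X x -> X c -> 0 < delta ->
  (forall y, fsupp psi y -> delta <= enorm (x - y)) ->
  (forall y, fsupp psi y -> delta <= enorm (c - y)) -> 0 <= B ->
  (forall y, X y -> psi y != 0 -> `|k x y - k c y| <= B) ->
  `|\int[mu]_y (k x y * psi y) - \int[mu]_y (k c y * psi y)|
    <= B * \int[mu]_y `|psi y|.
Proof.
move=> Xx Xc delta0 sepx sepc B0 hB.
have ix := integrable_kernel_integrand Xx delta0 sepx.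
have ic := integrable_kernel_integrand Xc delta0 sepc.
rewrite !Rintegral_kernel_restrict -RintegralB //.
apply: le_trans (le_normr_Rintegral measurableT (integrable_EFinB ix ic)) _.
rewrite -RintegralZl //; last exact: integrable_norm.
apply: le_Rintegral => //.
- exact/integrable_norm/integrable_EFinB.
- exact/integrable_EFinZl/integrable_norm.
move=> y _; rewrite -mulrBl normrM.
case: ifPn => [/set_mem [Xy _]|_]; last by rewrite subrr normr0 mul0r mulr_ge0.
have [->|psiy] := eqVneq (psi y) 0; first by rewrite normr0 !mulr0.
by apply: ler_wpM2r => //; exact: hB.
Qed.

Lemma Rintegral_kernel_diff_le_cube (Q Rc : set 'rV[R]_d) a lQ lR D x c :
  is_cube Q a lQ -> lQ <= lR -> Q x -> Q c -> X x -> X c ->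
  (forall y, ~ Rc y -> psi y = 0) ->
  (forall z y, Q z -> fsupp psi y -> wgeomean (tau / (2 * (m + tau))) lQ lR <= enorm (z - y)) ->
  0 < D -> (forall z y, Q z -> Rc y -> D <= 2 * lR + enorm (z - y)) ->
  `|\int[mu]_y (k x y * psi y) - \int[mu]_y (k c y * psi y)|
    <= CZ_diff_const (Num.sqrt d%:R) m Ccz tau
         * (lQ `^ (tau / 2) * lR `^ (tau / 2) / D `^ (m + tau)) * \int[mu]_y `|psi y|.
Proof.
move=> cQ lQR Qx Qc Xx Xc psi0 sep D0 DR.
have lQ0 : 0 < lQ by case: cQ.
have delta0 : 0 < wgeomean (tau / (2 * (m + tau))) lQ lR.
  by apply: wgeomean_gt0 => //; exact: lt_le_trans lQR.
apply: (Rintegral_kernel_diff_le Xx Xc delta0 (fun y => sep x y Qx) (fun y => sep c y Qc)).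
  by rewrite mulr_ge0 ?divr_ge0 ?mulr_ge0 ?powR_ge0 ?ltW // /CZ_diff_const;
     rewrite !mulr_gt0 ?powR_gt0 //; have := sqrt_dim_ge1 R d0; lra.
move=> y Xy psiy; have Ry : Rc y by apply: contrapT => /psi0; exact/eqP.
have Sy : fsupp psi y by apply: subset_closure.
apply: CZ_kernel_diff_le C0 t0 m0 hk Xx Xc Xy lQ0 lQR (sqrt_dim_ge1 R d0) _ (sep _ _ Qx Sy)
  (sep _ _ Qc Sy) D0 (DR _ _ Qx Ry).
exact: is_cube_enorm_le cQ Qx Qc.
Qed.

End kernel_integral.

Theorem lemma20 (R : realType) (d : nat) (m Ccz tau : R) :
  (0 < d)%N -> 0 < m -> 0 < Ccz -> 0 < tau <= 1 ->
  exists C : R, 0 < C /\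
  forall (X : set 'rV[R]_d) (k : 'rV[R]_d -> 'rV[R]_d -> R)
    (mu : {measure set (Rd R d) -> \bar R})
    (T : (Rd R d -> R) -> (Rd R d -> R))
    (Q Rc : set (Rd R d)) (a b : 'rV[R]_d) (lQ lR : R)
    (phi psi : Rd R d -> R),
  closed X ->
  CZ_kernel X m Ccz tau k ->
  (mu setT < +oo)%E ->
  mu (~` X) = 0%E ->
  bounded_op_L2 mu T ->
  (forall f, L2 mu f ->
     {ae mu, forall x, ~ fsupp f x ->
        T f x = Rintegral mu setT (fun y => k x y * f y)}) ->
  is_cube Q a lQ -> is_cube Rc b lR ->
  measurable Q -> measurable Rc ->
  lQ <= lR ->
  L2 mu phi -> L2 mu psi ->
  (forall x, ~ Q x -> phi x = 0) ->
  (forall x, ~ Rc x -> psi x = 0) ->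
  Rintegral mu setT phi = 0 ->
  ((powR lQ (tau / (2 * (tau + m))) * powR lR (1 - tau / (2 * (tau + m))))%:E
     <= setdist Q (fsupp psi))%E ->
  `|Rintegral mu setT (fun x => phi x * T psi x)|
    <= C * (powR lQ (tau / 2) * powR lR (tau / 2))
         / powR (lQ + lR + fine (setdist Q Rc)) (m + tau)
         * Num.sqrt (fine (mu Q)) * Num.sqrt (fine (mu Rc))
         * L2norm mu phi * L2norm mu psi.
Proof.
move=> d0 m0 C0 /andP[t0 _]; pose C := CZ_diff_const (Num.sqrt d%:R) m Ccz tau.
have C_gt0 : 0 < C by rewrite !mulr_gt0 ?powR_gt0 //; have := sqrt_dim_ge1 R d0; lra.
exists C; split => // X k mu T Q Rc a b lQ lR phi psi cX hk muT muX hT hTk cQ cR mQ mR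
  lQR [mphi phiL2] [mpsi psiL2] phi0 psi0 phi_mean0.
set delta := _ * _ => hsep; have lQ0 : 0 < lQ by case: cQ.
have delta0 : 0 < delta by rewrite mulr_gt0 ?powR_gt0 //; exact: lt_le_trans lQR.
have sep z y : Q z -> fsupp psi y -> wgeomean (tau / (2 * (m + tau))) lQ lR <= enorm (z - y).
  by rewrite /wgeomean addrC; apply: le_setdist_enorm.
set D := lQ + lR + _.
have D0 : 0 < D by have := fine_ge0 (setdist_ge0 Q Rc); rewrite /D; lra.
have DR z y : Q z -> Rc y -> D <= 2 * lR + enorm (z - y) by exact: sides_setdist_le.
set B := C * (lQ `^ (tau / 2) * lR `^ (tau / 2) / D `^ (m + tau)).
have ipsi := integrable_supported_L2 mR mpsi psi0 muT psiL2.
have [NT [mNT NT0 hNT]] := hTk psi (conj mpsi psiL2).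
have Tk z : ~ NT z -> Q z -> T psi z = \int[mu]_y (k z y * psi y).
  move=> NTz Qz; apply: contrapT => Tz; apply: NTz; apply: hNT => /= hz.
  by apply/Tz/hz; exact: le_setdist_notin delta0 hsep Qz.
have Tpsi_diff x c : ~ (NT `|` ~` X) x -> ~ (NT `|` ~` X) c ->
    phi x != 0 -> phi c != 0 -> `|T psi x - T psi c| <= B * \int[mu]_y `|psi y|.
  move=> /not_orP[NTx /contrapT Xx] /not_orP[NTc /contrapT Xc] phix phic.
  have Qx : Q x by apply: contrapT => /phi0; exact/eqP.
  have Qc : Q c by apply: contrapT => /phi0; exact/eqP.
  by rewrite !Tk //; apply: Rintegral_kernel_diff_le_cube cQ lQR Qx Qc Xx Xc psi0 sep D0 DR.
have mCX := Rd_measurable_compl_closed cX.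
have mN : measurable (NT `|` ~` X) by exact: measurableU.
have N0 : mu (NT `|` ~` X) = 0%E by rewrite measureU0.
have B0 : 0 <= B by rewrite /B mulr_ge0 ?divr_ge0 ?mulr_ge0 ?powR_ge0 ?ltW.
have absphi0 : 0 <= \int[mu]_y `|phi y| by apply: Rintegral_ge0.
have abspsi0 : 0 <= \int[mu]_y `|psi y| by apply: Rintegral_ge0.
apply: le_trans (abs_Rintegral_mul_mean0_le mN N0 mphi (hT.1 psi (conj mpsi psiL2)).1
  (integrable_supported_L2 mQ mphi phi0 muT phiL2) phi_mean0 (mulr_ge0 B0 abspsi0) Tpsi_diff) _.
rewrite -[B * _ * _]mulrA; apply: le_trans (ler_wpM2l B0 (ler_pM abspsi0 absphi0
  (Rintegral_abs_le_sqrt_measure_Lnorm2 mR mpsi psi0 muT psiL2)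
  (Rintegral_abs_le_sqrt_measure_Lnorm2 mQ mphi phi0 muT phiL2))) _.
by rewrite le_eqVlt; apply/orP; left; apply/eqP; rewrite /B /L2norm; ring.
Qed.
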